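(* Consider Problem (P) (defined in the context) with objective $f_{Pa}$. Then Algorithm 2 (run with $\hat f_P=\hat f_{Pa}$) yields a solution $\mathcal{Y}_a^g$ satisfying $$f_{Pa}(\mathcal{Y}_a^g)\ge\frac{\min\{\gamma_2,1\}}{2}\big(1-e^{-\gamma_1}\big)f_{Pa}(\mathcal{Y}_a^\star)-\Big(\frac{B+c_{\max}}{c_{\min}}+1\Big)\varepsilon,$$ where $\mathcal{Y}_a^\star$ is an optimal solution to Problem (P), $\gamma_1,\gamma_2\ge0$ are the type-1 and type-2 greedy submodularity ratios of $f_{Pa}$, $c_{\min}=\min_{y\in\bar{\mathcal{M}}}c(y)$, $c_{\max}=\max_{y\in\bar{\mathcal{M}}}c(y)$, and $\varepsilon\ge0$ satisfies $|\hat f_{Pa}(\mathcal{Y})-f_{Pa}(\mathcal{Y})|\le\varepsilon/2$ for all $\mathcal{Y}\subseteq\bar{\mathcal{M}}$.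
   Context: Setting: networked SIR model on directed graph $\mathcal{G}=(\mathcal{V},\mathcal{E})$, $\mathcal{V}=[n]$, $\bar{\mathcal{N}}_i=\{j:(j,i)\in\mathcal{E}\}\cup\{i\}$, weights $a_{ij}\ge0$, sampling parameter $h$, dynamics $s_i[k+1]=s_i[k]-hs_i[k]\beta\sum_{j\in\bar{\mathcal{N}}_i}a_{ij}x_j[k]$, $x_i[k+1]=(1-h\delta)x_i[k]+hs_i[k]\beta\sum_{j\in\bar{\mathcal{N}}_i}a_{ij}x_j[k]$, $r_i[k+1]=r_i[k]+h\delta x_i[k]$, known initial condition, $\theta=[\beta\ \delta]^T$ with prior pdf $p(\theta)$; $x_i[k],r_i[k]\in[0,1)$ are viewed as functions of $\theta$. Given integers $1\le t_1\le t_2$ and, for each $i$, integers $N_i^x,N_i^r,\zeta_i,\eta_i\ge1$, and costs $c_{k,i},b_{k,i}>0$, budget $B\ge0$. Ground set $\bar{\mathcal{M}}=\{(\hat x_i[k],l):i\in\mathcal{V},k\in\{t_1,\dots,t_2\},l\in[\zeta_i]\}\cup\{(\hat r_i[k],l):i\in\mathcal{V},k\in\{t_1,\dots,t_2\},l\in[\eta_i]\}$, with $c((\hat x_i[k],l))=c_{k,i}$, $c((\hat r_i[k],l))=b_{k,i}$, $c(\mathcal{Y})=\sum_{y\in\mathcal{Y}}c(y)$. For $y=(\hat x_i[k],l)$, $H_y=\mathbb{E}_\theta\big[\frac{N_i^x}{x_i[k](1-x_i[k])}\frac{\partial x_i[k]}{\partial\theta}(\frac{\partial x_i[k]}{\partial\theta})^T\big]$,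 and for $y=(\hat r_i[k],l)$, $H_y=\mathbb{E}_\theta\big[\frac{N_i^r}{r_i[k](1-r_i[k])}\frac{\partial r_i[k]}{\partial\theta}(\frac{\partial r_i[k]}{\partial\theta})^T\big]$ (integrand taken as $0$ where the state is $0$); $\mathbb{E}_\theta$ is w.r.t. $p(\theta)$; $H_y\succeq0$. $H(\mathcal{Y})=\sum_{y\in\mathcal{Y}}H_y$. $F_p=\mathbb{E}_\theta[\nabla_\theta\ln p(\theta)\nabla_\theta\ln p(\theta)^T]\succ0$. $f_{Pa}(\mathcal{Y})=\mathrm{Tr}(F_p^{-1})-\mathrm{Tr}((F_p+H(\mathcal{Y}))^{-1})$. Problem (P): maximize $f_{Pa}(\mathcal{Y})$ over $\mathcal{Y}\subseteq\bar{\mathcal{M}}$ subject to $c(\mathcal{Y})\le B$. $\hat f_{Pa}$ is any set function with $\hat f_{Pa}(\emptyset)=0$ approximating $f_{Pa}$. Algorithm 2: (1) pick $\mathcal{Y}_1=\{y\}$ with $y\in\arg\max_{y\in\bar{\mathcal{M}}}\hat f_{Pa}(\{y\})$; (2) set $\mathcal{Y}_2=\emptyset$, $\mathcal{C}=\bar{\mathcal{M}}$; (3) while $\mathcal{C}\ne\emptyset$: choose $y^\star\in\arg\max_{y\in\mathcal{C}}\frac{\hat f_{Pa}(\{y\}\cup\mathcal{Y}_2)-\hat f_{Pa}(\mathcal{Y}_2)}{c(y)}$; if $c(y^\star)+c(\mathcal{Y}_2)\le B$ add $y^\star$ to $\mathcal{Y}_2$; remove $y^\star$ from $\mathcal{C}$;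 (4) output whichever of $\mathcal{Y}_1,\mathcal{Y}_2$ has larger $\hat f_{Pa}$ value. For this run, let $\mathcal{Y}_2^j$ be the set of the first $j$ elements added to $\mathcal{Y}_2$ ($\mathcal{Y}_2^0=\emptyset$). The type-1 greedy submodularity ratio $\gamma_1$ is the largest real with $\sum_{y\in\mathcal{A}\setminus\mathcal{Y}_2^j}(f_{Pa}(\{y\}\cup\mathcal{Y}_2^j)-f_{Pa}(\mathcal{Y}_2^j))\ge\gamma_1(f_{Pa}(\mathcal{A}\cup\mathcal{Y}_2^j)-f_{Pa}(\mathcal{Y}_2^j))$ for all $\mathcal{A}\subseteq\bar{\mathcal{M}}$ and $j\in\{0,\dots,|\mathcal{Y}_2|\}$. The type-2 greedy submodularity ratio $\gamma_2$ is the largest real with $f_{Pa}(\mathcal{Y}_1)-f_{Pa}(\emptyset)\ge\gamma_2(f_{Pa}(\{y\}\cup\mathcal{Y}_2^j)-f_{Pa}(\mathcal{Y}_2^j))$ for all $j\in\{0,\dots,|\mathcal{Y}_2|\}$ and all $y\in\bar{\mathcal{M}}\setminus\mathcal{Y}_2^j$ with $c(y)+c(\mathcal{Y}_2^j)>B$. *)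

From mathcomp Require Import all_boot all_order all_algebra.
From mathcomp Require Import all_classical all_reals all_analysis.
Set Implicit Arguments. Unset Strict Implicit. Unset Printing Implicit Defensive.
Import Order.TTheory GRing.Theory Num.Theory.
Local Open Scope ring_scope.

Section Defs.
Variables (R : realType) (M : finType).

Definition setcost (c : M -> R) (Y : {set M}) : R := \sum_(y in Y) c y.

Definition psdmx (A : 'M[R]_2) : Prop :=
  A^T = A /\ forall v : 'cV[R]_2, 0 <= (v^T *m A *m v) ord0 ord0.
Definition pdmx (A : 'M[R]_2) : Prop :=
  A^T = A /\ forall v : 'cV[R]_2, v != 0 -> 0 < (v^T *m A *m v) ord0 ord0.

Definition Hset (H : M -> 'M[R]_2) (Y : {set M}) : 'M[R]_2 := \sum_(y in Y) H y.
Definition fPa (Fp : 'M[R]_2) (H : M -> 'M[R]_2) (Y : {set M}) : R :=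
  \tr (invmx Fp) - \tr (invmx (Fp + Hset H Y)).

(* Step (3) of Algorithm 2: [s] is the order in which the candidates are
   removed from C; [greedy_added c B acc s] is the list (in order) of the
   elements added to Y_2 when processing [s] starting from Y_2 = acc. *)
Fixpoint greedy_added (c : M -> R) (B : R) (acc : seq M) (s : seq M) : seq M :=
  match s with
  | [::] => acc
  | y :: s' =>
      greedy_added c B
        (if c y + setcost c [set x in acc] <= B then rcons acc y else acc) s'
  end.

Definition Y2j (c : M -> R) (B : R) (s : seq M) (j : nat) : {set M} :=
  [set x in take j (greedy_added c B [::] s)].

Definition Y2fin (c : M -> R) (B : R) (s : seq M) : {set M} :=
  [set x in greedy_added c B [::] s].

Definition nadded (c : M -> R) (B : R) (s : seq M) : nat :=
  size (greedy_added c B [::] s).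

Definition alg2_step1 (fhat : {set M} -> R) (y1 : M) : Prop :=
  forall y, fhat [set y]%SET <= fhat [set y1]%SET.

(* Step (3): s is a valid removal order: every element of the ground set is
   removed exactly once, and at step j the removed element s_j maximizes the
   marginal-gain/cost ratio among the remaining candidates C w.r.t. the
   current Y_2 (any tie-breaking allowed). *)
Definition alg2_step3 (fhat : {set M} -> R) (c : M -> R) (B : R) (s : seq M)
  : Prop :=
  perm_eq s (enum M) /\
  forall j, (j < size s)%N ->
    let Y := [set x in greedy_added c B [::] (take j s)] in
    forall y, y \notin take j s ->
      (fhat (y |: Y) - fhat Y) / c y
        <= (fhat (nth y s j |: Y) - fhat Y) / c (nth y s j).

Definition alg2_output (fhat : {set M} -> R) (Y1 Y2 Yg : {set M}) : Prop :=
  (Yg = Y1 \/ Yg = Y2) /\ fhat Y1 <= fhat Yg /\ fhat Y2 <= fhat Yg.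

Definition type1_ok (f : {set M} -> R) (c : M -> R) (B : R) (s : seq M)
  (gamma : R) : Prop :=
  forall (A : {set M}) (j : nat), (j <= nadded c B s)%N ->
    gamma * (f (A :|: Y2j c B s j) - f (Y2j c B s j))
      <= \sum_(y in A :\: Y2j c B s j) (f (y |: Y2j c B s j) - f (Y2j c B s j)).

Definition type1_ratio f c B s (gamma : R) : Prop :=
  type1_ok f c B s gamma /\ forall g, type1_ok f c B s g -> g <= gamma.

Definition type2_ok (f : {set M} -> R) (c : M -> R) (B : R) (Y1 : {set M})
  (s : seq M) (gamma : R) : Prop :=
  forall (j : nat) (y : M), (j <= nadded c B s)%N ->
    y \notin Y2j c B s j -> B < c y + setcost c (Y2j c B s j) ->
    gamma * (f (y |: Y2j c B s j) - f (Y2j c B s j)) <= f Y1 - f (@finset.set0 M).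

Definition type2_ratio f c B Y1 s (gamma : R) : Prop :=
  type2_ok f c B Y1 s gamma /\ forall g, type2_ok f c B Y1 s g -> g <= gamma.

End Defs.

(* f_Pa(Y) = Tr F_p^-1 - Tr (F_p + H(Y))^-1 is monotone with f_Pa({}) = 0: for 2x2
   matrices, adding a positive semidefinite H to a positive definite A can only
   decrease Tr A^-1 = Tr A / det A.  For any such f, the cost-benefit greedy analysis
   survives an eps/2-accurate oracle.  While no element of the optimum Ystar has been
   rejected, a greedy step on y closes the fraction gamma1 c(y) / B of the gap
   f(Ystar) - f(Y2^j), up to an error eps + c(y) |Ystar| eps / B from comparing
   estimated ratios, so the gap decays like exp(-gamma1 c(Y2^j) / B).  At the first
   rejected y in Ystar, c(Y2^j) + c(y) > B, hence
   f(Y2^j + y) >= (1 - exp(-gamma1)) f(Ystar) - 2 K eps with K = (B + cmax) / cmin.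
   The type-2 ratio shares min(gamma2, 1) f(Y2^j + y) between f(Y1) and f(Y2), and
   the output is within eps of the better of the two. *)

From mathcomp Require Import all_boot all_order all_algebra.
From mathcomp Require Import all_classical all_reals all_analysis.
From mathcomp Require Import ring lra.
Import Order.TTheory GRing.Theory Num.Theory.
Local Open Scope ring_scope.
Set Implicit Arguments. Unset Strict Implicit.

Lemma ord2E : [/\ widen_ord (leqnSn 1) ord_max = 0 :> 'I_2,
  ord_max = 1 :> 'I_2, lift 0 0 = 1 :> 'I_2 & lift 1 0 = 0 :> 'I_2].
Proof. by split; apply/val_inj. Qed.

Lemma det_mx2 (R : comNzRingType) (A : 'M[R]_2) :
  \det A = A 0 0 * A 1 1 - A 0 1 * A 1 0.
Proof.
rewrite (expand_det_row _ 0) !big_ord_recr big_ord0 /= /cofactor !det_mx11 !mxE /=.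
case: ord2E => -> -> -> _; rewrite expr0 expr1 (_ : lift _ _ = 0); [ring | exact/val_inj].
Qed.

Lemma mxtrace2 (R : comNzRingType) (A : 'M[R]_2) : \tr A = A 0 0 + A 1 1.
Proof. by rewrite /mxtrace !big_ord_recr big_ord0 /= add0r; case: ord2E => -> -> _ _. Qed.

Lemma mxtrace_adj2 (R : comNzRingType) (A : 'M[R]_2) : \tr (\adj A) = \tr A.
Proof.
rewrite !mxtrace2 !mxE /cofactor !det_mx11 !mxE /=.
by case: ord2E => _ _ -> ->; rewrite addn0 expr0 mul1r /= expr2 mulrNN !mul1r addrC.
Qed.

Lemma mxtrace_invmx2 (R : fieldType) (A : 'M[R]_2) : \det A != 0 ->
  \tr (invmx A) = \tr A / \det A.
Proof. by move=> detA; rewrite /invmx unitmxE unitfE detA mxtraceZ mxtrace_adj2 mulrC. Qed.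

Section PsdMatrices2.
Variable R : realType.
Implicit Types A H : 'M[R]_2.

Definition col2 (x y : R) : 'cV[R]_2 := \col_i (if i == 0 then x else y).

Lemma col2_eq0 x y : (col2 x y == 0) = (x == 0) && (y == 0).
Proof.
apply/idP/idP => [/eqP/matrixP e | /andP[/eqP-> /eqP->]].
  by have := e 0 0; have := e 1 0; rewrite !mxE /= => -> ->; rewrite eqxx.
by apply/eqP/matrixP => i j; rewrite !mxE; case: ifP.
Qed.

Lemma sym_mx2 A : A^T = A -> A 1 0 = A 0 1.
Proof. by move=> /matrixP /(_ 0 1); rewrite mxE. Qed.

Lemma qform2 A x y : A^T = A ->
  ((col2 x y)^T *m A *m col2 x y) 0 0 = x * x * A 0 0 + 2 * x * y * A 0 1 + y * y * A 1 1.
Proof.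
move=> /sym_mx2 sym.
rewrite !mxE !big_ord_recr big_ord0 /= !mxE !big_ord_recr !big_ord0 /= !mxE.
case: ord2E => -> -> _ _ /=; rewrite sym; ring.
Qed.

Lemma psdmx2P A : psdmx A ->
  A 1 0 = A 0 1 /\ forall x y, 0 <= x * x * A 0 0 + 2 * x * y * A 0 1 + y * y * A 1 1.
Proof. by case=> sym psd; split=> [|x y]; [apply: sym_mx2 | rewrite -qform2]. Qed.

Lemma pdmx2P A : pdmx A -> [/\ A 1 0 = A 0 1, 0 < A 0 0, 0 < A 1 1 & 0 < \det A].
Proof.
case=> sym pd; have A10 := sym_mx2 sym.
have q x y : (x, y) != (0, 0) -> 0 < x * x * A 0 0 + 2 * x * y * A 0 1 + y * y * A 1 1.
  by move=> xy; rewrite -qform2 // pd // col2_eq0 -xpair_eqE.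
have a_gt0 : 0 < A 0 0 by have := q 1 0; rewrite xpair_eqE oner_eq0 /=; lra.
have d_gt0 : 0 < A 1 1 by have := q 0 1; rewrite xpair_eqE oner_eq0 andbF /=; lra.
split=> //; rewrite det_mx2 A10 -(pmulr_rgt0 _ d_gt0).
have /q : (A 1 1, - A 0 1) != (0, 0) by rewrite xpair_eqE negb_and gt_eqF.
nra.
Qed.

Lemma psdmx2_det_ge0 A : psdmx A -> 0 <= \det A.
Proof.
case/psdmx2P=> A10 q; rewrite det_mx2 A10.
have p_ge0 : 0 <= A 0 0 by have := q 1 0; lra.
have r_ge0 : 0 <= A 1 1 by have := q 0 1; lra.
have : 0 <= (A 0 0 + A 1 1) * (A 0 0 * A 1 1 - A 0 1 * A 0 1).
  by have := q (A 0 1) (- A 0 0); have := q (A 1 1) (- A 0 1); nra.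
have [tr_gt0 | tr_lt0 | tr0] := ltrgt0P (A 0 0 + A 1 1); [by rewrite pmulr_rge0 | lra |].
have [-> ->] : A 0 0 = 0 /\ A 1 1 = 0 by lra.
by have := q 1 (- A 0 1); nra.
Qed.

Lemma psdmx0 : psdmx (0 : 'M[R]_2).
Proof. by split=> [|v]; rewrite ?trmx0 // mulmx0 mul0mx mxE. Qed.

Lemma psdmxD A H : psdmx A -> psdmx H -> psdmx (A + H).
Proof.
case=> symA psdA [symH psdH]; split=> [|v]; first by rewrite linearD /= symA symH.
by rewrite mulmxDr mulmxDl mxE addr_ge0.
Qed.

Lemma pdmxD A H : pdmx A -> psdmx H -> pdmx (A + H).
Proof.
case=> symA pdA [symH psdH]; split=> [|v v0]; first by rewrite linearD /= symA symH.
by rewrite mulmxDr mulmxDl mxE ltr_wpDr ?pdA.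
Qed.

Lemma psdmx_sum (I : finType) (P : pred I) (F : I -> 'M[R]_2) :
  (forall i, P i -> psdmx (F i)) -> psdmx (\sum_(i | P i) F i).
Proof. by move=> psdF; apply: big_ind => //; [exact: psdmx0 | exact: psdmxD]. Qed.

Lemma mxtrace_invmxD_le A H : pdmx A -> psdmx H ->
  \tr (invmx (A + H)) <= \tr (invmx A).
Proof.
move=> pdA psdH; have [A10 a_gt0 d_gt0 detA_gt0] := pdmx2P pdA.
have [_ _ _ detAH_gt0] := pdmx2P (pdmxD pdA psdH).
have detH_ge0 := psdmx2_det_ge0 psdH; have [H10 q] := psdmx2P psdH.
rewrite !mxtrace_invmx2 ?gt_eqF // ler_pdivrMr // mulrAC ler_pdivlMr //.
move: detH_ge0; rewrite !mxtrace2 !det_mx2 !mxE A10 H10 => detH_ge0.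
(* With A = [a b; b d] and Q the quadratic form of H, the right side minus the
   left side is (tr A) (det H) + Q(b, -a) + Q(d, -b). *)
have := mulr_ge0 (addr_ge0 (ltW a_gt0) (ltW d_gt0)) detH_ge0.
have := q (A 0 1) (- A 0 0); have := q (A 1 1) (- A 0 1).
nra.
Qed.
End PsdMatrices2.

Section FisherObjective.
Variables (R : realType) (M : finType) (Fp : 'M[R]_2) (H : M -> 'M[R]_2).

Lemma fPa_set0 : fPa Fp H finset.set0 = 0.
Proof. by rewrite /fPa /Hset big_set0 addr0 subrr. Qed.

Lemma fPa_mono : pdmx Fp -> (forall y, psdmx (H y)) ->
  forall S T : {set M}, S \subset T -> fPa Fp H S <= fPa Fp H T.
Proof.
move=> pdFp psdH S T ST; rewrite /fPa lerD2l lerN2.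
rewrite /Hset (big_setID S) /= (finset.setIidPr ST) addrA.
by apply: mxtrace_invmxD_le; [apply: pdmxD => // | ]; apply: psdmx_sum.
Qed.

End FisherObjective.

Section GreedyRun.
Variables (R : realType) (M : finType) (c : M -> R) (B : R) (s : seq M).

Lemma greedy_added_cat acc s1 s2 :
  greedy_added c B acc (s1 ++ s2) = greedy_added c B (greedy_added c B acc s1) s2.
Proof. by elim: s1 acc => //= y s1 IH acc; rewrite IH. Qed.

Lemma greedy_added_extends acc t : exists u, greedy_added c B acc t = acc ++ u.
Proof.
elim: t acc => [|y t IH] acc /=; first by exists [::]; rewrite cats0.
case: ifP => _; last exact: IH.
by have [u ->] := IH (rcons acc y); exists (y :: u); rewrite -cats1 -catA.
Qed.

Lemma greedy_added_sub acc t : {subset greedy_added c B acc t <= acc ++ t}.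
Proof.
elim: t acc => [|y t IH] acc /=; first by rewrite cats0.
move=> x /IH; rewrite !mem_cat inE; case: ifP => _; last by case/orP=> ->; rewrite ?orbT.
by rewrite mem_rcons inE => /orP[/orP[]|] ->; rewrite ?orbT.
Qed.

Definition greedy_set k : {set M} := [set x in greedy_added c B [::] (take k s)].

Lemma greedy_set0 : greedy_set 0 = finset.set0.
Proof. by apply/setP => x; rewrite !inE take0. Qed.

Lemma greedy_setS y0 k : (k < size s)%N ->
  greedy_set k.+1 = if c (nth y0 s k) + setcost c (greedy_set k) <= B
                    then nth y0 s k |: greedy_set k else greedy_set k.
Proof.
move=> ks; rewrite /greedy_set (take_nth y0 ks) -cats1 greedy_added_cat /=.
by case: ifP => _ //; apply/setP => x; rewrite !inE mem_rcons inE.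
Qed.

Lemma greedy_set_subset k k' : (k <= k')%N -> greedy_set k \subset greedy_set k'.
Proof.
move=> kk'; set t := take k' s.
have [u] := greedy_added_extends (greedy_added c B [::] (take k t)) (drop k t).
rewrite -greedy_added_cat cat_take_drop take_takel // => ext.
by apply/fintype.subsetP => x; rewrite !inE ext mem_cat => ->.
Qed.

Lemma greedy_set_size : greedy_set (size s) = Y2fin c B s.
Proof. by rewrite /greedy_set take_size. Qed.

Lemma Y2j_greedy_set k :
  exists2 j, (j <= nadded c B s)%N & Y2j c B s j = greedy_set k.
Proof.
rewrite /Y2j /nadded /greedy_set -[in greedy_added _ _ _ s](cat_take_drop k s).
rewrite greedy_added_cat; set p := greedy_added c B [::] (take k s).
have [u ->] := greedy_added_extends p (drop k s).
by exists (size p); rewrite ?size_cat ?leq_addr ?take_size_cat.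
Qed.

Lemma mem_greedy_set k x : x \in greedy_set k -> x \in take k s.
Proof. by rewrite inE => /greedy_added_sub. Qed.

Lemma nth_notin_greedy_set y0 k : uniq s -> (k < size s)%N ->
  nth y0 s k \notin greedy_set k.
Proof.
move=> s_uniq ks; apply: contraTN s_uniq => /mem_greedy_set yk.
by rewrite -(cat_take_drop k s) (drop_nth y0 ks) cat_uniq /= yk andbF.
Qed.

Lemma greedy_set_cost k : 0 <= B -> uniq s -> (k <= size s)%N ->
  setcost c (greedy_set k) <= B.
Proof.
move=> B_ge0 s_uniq; elim: k => [|k IH] ks.
  by rewrite greedy_set0 /setcost big_set0.
have [y0 _] : exists y0 : M, true by move: ks; case: s => // y0; exists y0.
rewrite (greedy_setS y0 ks); case: ifP => [fits|_]; last exact: IH (ltnW ks).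
by rewrite /setcost big_setU1 ?nth_notin_greedy_set.
Qed.

End GreedyRun.

Lemma expR_decay_step (R : realType) (x u z a a' E d : R) :
  0 <= x -> 0 <= a -> 0 <= E -> a <= expR (- u) * z + E ->
  a' <= (1 - x) * a + d -> a' <= expR (- (u + x)) * z + (E + d).
Proof.
move=> x_ge0 a_ge0 E_ge0 a_le a'_le.
have lin_le_exp : (1 - x) * a <= expR (- x) * a.
  by rewrite ler_wpM2r //; have := expR_ge1Dx (- x); lra.
have exp_a : expR (- x) * a <= expR (- x) * (expR (- u) * z + E).
  by rewrite ler_wpM2l ?expR_ge0.
have exp_E : expR (- x) * E <= E by rewrite ler_piMl // expR_le1 oppr_le0.
have -> : expR (- (u + x)) * z = expR (- x) * (expR (- u) * z) by rewrite opprD expRD; ring.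
lra.
Qed.

Section SetCost.
Variables (R : realType) (M : finType) (c : M -> R).

Lemma setcost_ge0 (A : {set M}) : (forall y, 0 <= c y) -> 0 <= setcost c A.
Proof. by move=> c_ge0; apply: sumr_ge0. Qed.

Lemma setcost_subset (A C : {set M}) : (forall y, 0 <= c y) ->
  A \subset C -> setcost c A <= setcost c C.
Proof.
move=> c_ge0 AsubC; rewrite /setcost [X in _ <= X](big_setID A) /=.
by rewrite (finset.setIidPr AsubC) lerDl sumr_ge0.
Qed.

Lemma card_mul_le_setcost (A : {set M}) cmin : (forall y, cmin <= c y) ->
  #|A|%:R * cmin <= setcost c A.
Proof. by move=> cmin_le; rewrite /setcost mulr_natl -sumr_const ler_sum. Qed.

Lemma setcost_mem (A : {set M}) y : (forall y, 0 <= c y) -> y \in A ->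
  c y <= setcost c A.
Proof.
move=> c_ge0 yA; have := @setcost_subset [set y] A c_ge0.
by rewrite /setcost big_set1 finset.sub1set; apply.
Qed.

End SetCost.

Section ApproximateGreedy.
Variables (R : realType) (M : finType) (c : M -> R) (B : R) (s : seq M) (y0 : M).
Variables (f fhat : {set M} -> R) (eps : R) (Ystar : {set M}) (gamma1 : R).
Hypothesis c_gt0 : forall y, 0 < c y.
Hypothesis B_ge0 : 0 <= B.
Hypothesis f_set0 : f finset.set0 = 0.
Hypothesis f_mono : forall S T : {set M}, S \subset T -> f S <= f T.
Hypothesis fhat_approx : forall Y, `|fhat Y - f Y| <= eps / 2.
Hypothesis Ystar_feasible : setcost c Ystar <= B.
Hypothesis Ystar_optimal : forall Y, setcost c Y <= B -> f Y <= f Ystar.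
Hypothesis greedy_order : alg2_step3 fhat c B s.
Hypothesis gamma1_ok : type1_ok f c B s gamma1.
Hypothesis gamma1_ge0 : 0 <= gamma1.

Let c_ge0 y : 0 <= c y := ltW (c_gt0 y).

Local Notation G := (greedy_set c B s).
Local Notation cand k := (nth y0 s k).

Lemma greedy_order_uniq : uniq s.
Proof. by rewrite (perm_uniq greedy_order.1) enum_uniq. Qed.

Lemma eps_ge0 : 0 <= eps.
Proof.
by have := fhat_approx finset.set0; have := normr_ge0 (fhat finset.set0 - f finset.set0); lra.
Qed.

Lemma approx_diff X Y : f X - f Y <= fhat X - fhat Y + eps.
Proof. by have := fhat_approx X; have := fhat_approx Y; rewrite !ler_norml; lra. Qed.

Lemma f_ge0 Y : 0 <= f Y.
Proof. by rewrite -f_set0 f_mono ?finset.sub0set. Qed.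

Lemma f_greedy_le_Ystar k : (k <= size s)%N -> f (G k) <= f Ystar.
Proof. by move=> ks; rewrite Ystar_optimal ?greedy_set_cost ?greedy_order_uniq. Qed.

Definition Ystar_kept k := forall i, (i < k)%N -> cand i \in Ystar ->
  c (cand i) + setcost c (G i) <= B.

Lemma Ystar_kept_greedy_set k y : Ystar_kept k ->
  y \in Ystar -> y \in take k s -> y \in G k.
Proof.
move=> kept yY yk; have ik := index_ltn yk.
have in_s : (index y s < size s)%N by rewrite index_mem (mem_take yk).
have candE : cand (index y s) = y by rewrite nth_index ?(mem_take yk).
apply: (fintype.subsetP (greedy_set_subset c B s ik)).
by rewrite (greedy_setS _ _ y0 in_s) (kept _ ik) candE ?setU11.
Qed.

Lemma marginal_le_ratio k y :
  (k < size s)%N -> Ystar_kept k -> y \in Ystar :\: G k ->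
  f (y |: G k) - f (G k)
    <= c y * ((f (cand k |: G k) - f (G k) + eps) / c (cand k)) + eps.
Proof.
move=> ks kept; rewrite inE => /andP[yG yY].
have y_cand : y \notin take k s by apply: contra yG; apply: Ystar_kept_greedy_set.
(* [y] was still a candidate at step [k], so its estimated gain per unit cost is
   at most that of [cand k]. *)
have := greedy_order.2 k ks y y_cand; rewrite (set_nth_default y0 y ks) -/(G k).
rewrite ler_pdivrMr // mulrAC ler_pdivlMr // => ratio_le.
have := approx_diff (y |: G k) (G k); have := approx_diff (G k) (cand k |: G k).
move=> cand_approx y_approx.
have gain_le : (fhat (y |: G k) - fhat (G k)) * c (cand k)
               <= (f (cand k |: G k) - f (G k) + eps) * c y.
  by apply: le_trans ratio_le _; apply: ler_wpM2r; [exact: ltW | lra].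
rewrite -ler_pdivlMr // in gain_le.
by rewrite mulrCA mulrA; lra.
Qed.

Lemma candidate_gain k : 0 < B -> (k < size s)%N -> Ystar_kept k ->
  f Ystar - f (cand k |: G k) <=
  (1 - gamma1 * c (cand k) / B) * (f Ystar - f (G k))
  + (1 + c (cand k) * #|Ystar|%:R / B) * eps.
Proof.
move=> B_gt0 ks kept; set Y := G k; set ck := c (cand k).
set r := (f (cand k |: Y) - f Y + eps) / ck.
have ck_gt0 : 0 < ck := c_gt0 _.
have r_ge0 : 0 <= r.
  apply: divr_ge0 (ltW ck_gt0).
  by have := @f_mono Y (cand k |: Y) (finset.subsetUr _ _); have := eps_ge0; lra.
have sum_le : \sum_(y in Ystar :\: Y) (f (y |: Y) - f Y) <= B * r + #|Ystar|%:R * eps.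
  apply: le_trans (ler_sum _ (fun y yY => marginal_le_ratio ks kept yY)) _.
  rewrite big_split /= -mulr_suml sumr_const -[eps *+ _]mulr_natl.
  apply: lerD; apply: ler_wpM2r;
    rewrite ?eps_ge0 ?ler_nat ?subset_leq_card ?finset.subsetDl //.
  exact: le_trans (setcost_subset c_ge0 (finset.subsetDl _ _)) Ystar_feasible.
have [j jn Yj] := Y2j_greedy_set c B s k.
have gain : gamma1 * (f Ystar - f Y) <= B * r + #|Ystar|%:R * eps.
  apply: le_trans sum_le; have := gamma1_ok Ystar jn; rewrite Yj; apply: le_trans.
  by rewrite ler_wpM2l // lerD2r f_mono // finset.subsetUl.
have := ler_wpM2l (divr_ge0 (ltW ck_gt0) (ltW B_gt0)) gain.
have -> : ck / B * (B * r + #|Ystar|%:R * eps)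
          = f (cand k |: Y) - f Y + eps + ck * #|Ystar|%:R / B * eps.
  by rewrite /r; field; rewrite !gt_eqF.
have -> : ck / B * (gamma1 * (f Ystar - f Y)) = gamma1 * ck / B * (f Ystar - f Y) by ring.
lra.
Qed.

Definition gap_bound (X N : R) : R :=
  expR (- (gamma1 * X / B)) * f Ystar + (N + X * #|Ystar|%:R / B) * eps.

Lemma candidate_gap k : 0 < B -> (k < size s)%N -> Ystar_kept k ->
  f Ystar - f (G k) <= gap_bound (setcost c (G k)) #|G k|%:R ->
  f Ystar - f (cand k |: G k)
    <= gap_bound (setcost c (G k) + c (cand k)) (#|G k|%:R + 1).
Proof.
move=> B_gt0 ks kept gap_le; rewrite /gap_bound.
have -> : gamma1 * (setcost c (G k) + c (cand k)) / B
          = gamma1 * setcost c (G k) / B + gamma1 * c (cand k) / B by ring.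
have -> : (#|G k|%:R + 1 + (setcost c (G k) + c (cand k)) * #|Ystar|%:R / B) * eps
          = (#|G k|%:R + setcost c (G k) * #|Ystar|%:R / B) * eps
            + (1 + c (cand k) * #|Ystar|%:R / B) * eps by ring.
apply: expR_decay_step gap_le (candidate_gain B_gt0 ks kept).
- exact: divr_ge0 (mulr_ge0 gamma1_ge0 (ltW (c_gt0 _))) (ltW B_gt0).
- by rewrite subr_ge0; apply/f_greedy_le_Ystar/ltnW.
- apply: mulr_ge0 _ eps_ge0; apply: addr_ge0 (ler0n _ _) _.
  exact: divr_ge0 (mulr_ge0 (setcost_ge0 _ c_ge0) (ler0n _ _)) (ltW B_gt0).
Qed.

Lemma greedy_gap k : 0 < B -> (k <= size s)%N -> Ystar_kept k ->
  f Ystar - f (G k) <= gap_bound (setcost c (G k)) #|G k|%:R.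
Proof.
move=> B_gt0; elim: k => [|k IH] ks kept.
  rewrite greedy_set0 /gap_bound /setcost big_set0 cards0 f_set0.
  by rewrite !(mulr0, mul0r, add0r) oppr0 expR0 mul1r; lra.
have kept_k : Ystar_kept k by move=> i ik; apply: kept; apply: ltnW.
have gap_k := IH (ltnW ks) kept_k.
rewrite (greedy_setS _ _ y0 ks); case: ifP => _; last exact: gap_k.
have cand_new := nth_notin_greedy_set c B y0 greedy_order_uniq ks.
have -> : setcost c (cand k |: G k) = setcost c (G k) + c (cand k).
  by rewrite /setcost big_setU1 //= addrC.
by rewrite cardsU1 cand_new add1n -natr1; apply: candidate_gap.
Qed.

Lemma Ystar_kept_or_rejected : Ystar_kept (size s) \/
  exists2 t, (t < size s)%N &
    [/\ Ystar_kept t, cand t \in Ystar & B < c (cand t) + setcost c (G t)].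
Proof.
pose rejected t :=
  [&& (t < size s)%N, cand t \in Ystar & B < c (cand t) + setcost c (G t)].
have [[t0 rej_t0] | none] := pselect (exists t, rejected t); last first.
  left=> i i_s iY; rewrite leNgt; apply/negP => rej; apply: none.
  by exists i; rewrite /rejected i_s iY rej.
right; have [t /and3P[ts tY rej_t] t_min] := ex_minnP (ex_intro rejected t0 rej_t0).
exists t => //; split=> // i it iY; rewrite leNgt; apply/negP => rej_i.
have := t_min i; rewrite /rejected iY rej_i (ltn_trans it ts) => /(_ isT).
by rewrite leqNgt it.
Qed.

Lemma Ystar_kept_subset : Ystar_kept (size s) -> Ystar \subset Y2fin c B s.
Proof.
move=> kept; apply/fintype.subsetP => y yY; rewrite -greedy_set_size.
by apply: Ystar_kept_greedy_set; rewrite // take_size (perm_mem greedy_order.1) mem_enum.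
Qed.

Variables (cmin cmax : R).
Hypotheses (cmin_le : forall y, cmin <= c y) (cmin_gt0 : 0 < cmin).
Hypothesis le_cmax : forall y, c y <= cmax.

Lemma rejected_candidate_gap t : 0 < B -> (t < size s)%N -> Ystar_kept t ->
  B < c (cand t) + setcost c (G t) ->
  f Ystar - f (cand t |: G t)
    <= expR (- gamma1) * f Ystar + 2 * ((B + cmax) / cmin) * eps.
Proof.
move=> B_gt0 ts kept rej.
apply: le_trans (candidate_gap B_gt0 ts kept (greedy_gap B_gt0 (ltnW ts) kept)) _.
rewrite /gap_bound.
set X := setcost c (G t); set ct := c (cand t); set N := #|G t|%:R; set n := #|Ystar|%:R.
have X_le : X <= B by apply: greedy_set_cost; rewrite ?greedy_order_uniq // ltnW.
have N_le : N * cmin <= B by apply: le_trans X_le; apply: card_mul_le_setcost.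
have n_le : n * cmin <= B by apply: le_trans Ystar_feasible; apply: card_mul_le_setcost.
have ct_le := le_cmax (cand t).
have cmin_le_cmax : cmin <= cmax by apply: le_trans ct_le.
apply: lerD; apply: ler_wpM2r; rewrite ?f_ge0 ?eps_ge0 //.
  rewrite ler_expR lerN2 -mulrA ler_peMr // ler_pdivlMr // mul1r addrC.
  exact: ltW.
have N1_le : N + 1 <= (B + cmax) / cmin.
  by rewrite ler_pdivlMr // mulrDl mul1r lerD.
have cost_le : (X + ct) * n / B <= (B + cmax) / cmin.
  rewrite ler_pdivrMr // mulrAC ler_pdivlMr // -mulrA.
  have cost_ge0 : 0 <= X + ct := addr_ge0 (setcost_ge0 _ c_ge0) (c_ge0 _).
  exact: ler_pM cost_ge0 (mulr_ge0 (ler0n _ _) (ltW cmin_gt0)) (lerD X_le ct_le) n_le.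
lra.
Qed.

Variables (Y1 : {set M}) (gamma2 : R).
Hypotheses (gamma2_ok : type2_ok f c B Y1 s gamma2) (gamma2_ge0 : 0 <= gamma2).

Lemma rejected_candidate_split t : (t < size s)%N ->
  B < c (cand t) + setcost c (G t) ->
  Num.min gamma2 1 * f (cand t |: G t) <= f Y1 + f (Y2fin c B s).
Proof.
move=> ts rej; have [j jn Yj] := Y2j_greedy_set c B s t.
have cand_gain : gamma2 * (f (cand t |: G t) - f (G t)) <= f Y1.
  have := @gamma2_ok j (cand t) jn; rewrite Yj f_set0 subr0; apply=> //.
  exact: nth_notin_greedy_set greedy_order_uniq ts.
have G_le_Y2 : f (G t) <= f (Y2fin c B s).
  by rewrite -greedy_set_size f_mono // greedy_set_subset // ltnW.
have gain_ge0 : 0 <= f (cand t |: G t) - f (G t).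
  by rewrite subr_ge0 f_mono // finset.subsetUr.
have m_le1 : Num.min gamma2 1 <= 1 by rewrite ge_min lexx orbT.
have := ler_wpM2r gain_ge0 (_ : Num.min gamma2 1 <= gamma2); rewrite ge_min lexx.
have := ler_piMl (f_ge0 (G t)) m_le1.
nra.
Qed.

Lemma approx_greedy_guarantee Yg : alg2_output fhat Y1 (Y2fin c B s) Yg ->
  Num.min gamma2 1 / 2 * (1 - expR (- gamma1)) * f Ystar
    - ((B + cmax) / cmin + 1) * eps <= f Yg.
Proof.
move=> [_ [Y1_le Y2_le]].
have Y1_Yg : f Y1 - eps <= f Yg by have := approx_diff Y1 Yg; lra.
have Y2_Yg : f (Y2fin c B s) - eps <= f Yg by have := approx_diff (Y2fin c B s) Yg; lra.
have m_ge0 : 0 <= Num.min gamma2 1 by rewrite le_min gamma2_ge0 ler01.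
have m_le1 : Num.min gamma2 1 <= 1 by rewrite ge_min lexx orbT.
have e_le1 : expR (- gamma1) <= 1 by rewrite expR_le1 oppr_le0.
have e_gt0 := expR_gt0 (- gamma1).
have cmax_gt0 : 0 < cmax := lt_le_trans (c_gt0 y0) (le_cmax y0).
have K_ge0 : 0 <= (B + cmax) / cmin :=
  divr_ge0 (addr_ge0 B_ge0 (ltW cmax_gt0)) (ltW cmin_gt0).
have K_eps_ge0 := mulr_ge0 K_ge0 eps_ge0.
have OPT_ge0 := f_ge0 Ystar.
case: Ystar_kept_or_rejected => [kept | [t ts [kept tY rej]]].
  have := f_mono (Ystar_kept_subset kept).
  have : Num.min gamma2 1 / 2 * (1 - expR (- gamma1)) * f Ystar <= f Ystar.
    by apply: ler_piMl OPT_ge0 _; nra.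
  nra.
have B_gt0 : 0 < B.
  exact: lt_le_trans (c_gt0 (cand t)) (le_trans (setcost_mem c_ge0 tY) Ystar_feasible).
have := rejected_candidate_split ts rej.
have : Num.min gamma2 1
         * ((1 - expR (- gamma1)) * f Ystar - 2 * ((B + cmax) / cmin) * eps)
       <= Num.min gamma2 1 * f (cand t |: G t).
  by apply: ler_wpM2l => //; have := rejected_candidate_gap B_gt0 ts kept rej; lra.
nra.
Qed.

End ApproximateGreedy.

Theorem theorem4 (R : realType) (M : finType)
  (c : M -> R) (B : R) (Fp : 'M[R]_2) (H : M -> 'M[R]_2)
  (fhat : {set M} -> R) (eps : R)
  (y1 : M) (s : seq M) (Yg Ystar : {set M})
  (gamma1 gamma2 cmin cmax : R) :
  (forall y, 0 < c y) ->
  0 <= B ->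
  pdmx Fp ->
  (forall y, psdmx (H y)) ->
  fhat (@finset.set0 M) = 0 ->
  0 <= eps ->
  (forall Y : {set M}, `|fhat Y - fPa Fp H Y| <= eps / 2) ->
  (* Ystar is an optimal solution of Problem (P) *)
  setcost c Ystar <= B ->
  (forall Y : {set M}, setcost c Y <= B -> fPa Fp H Y <= fPa Fp H Ystar) ->
  (* cmin, cmax *)
  (forall y, cmin <= c y) -> (exists y, c y = cmin) ->
  (forall y, c y <= cmax) -> (exists y, c y = cmax) ->
  (* a run of Algorithm 2 with fhat *)
  alg2_step1 fhat y1 ->
  alg2_step3 fhat c B s ->
  alg2_output fhat [set y1]%SET (Y2fin c B s) Yg ->
  (* greedy submodularity ratios of f_Pa for this run *)
  type1_ratio (fPa Fp H) c B s gamma1 ->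
  type2_ratio (fPa Fp H) c B [set y1]%SET s gamma2 ->
  Num.min gamma2 1 / 2 * (1 - expR (- gamma1)) * fPa Fp H Ystar
    - ((B + cmax) / cmin + 1) * eps
  <= fPa Fp H Yg.
Proof.
move=> c_gt0 B_ge0 pdFp psdH _ _ approx feasible optimal cmin_le [y cminE] le_cmax _ _.
move=> order output [gamma1_ok gamma1_max] [gamma2_ok gamma2_max].
have f_mono := fPa_mono pdFp psdH.
have gamma1_ge0 : 0 <= gamma1.
  apply: gamma1_max => A j _; rewrite mul0r; apply: sumr_ge0 => x _.
  by rewrite subr_ge0 f_mono // finset.subsetUr.
have gamma2_ge0 : 0 <= gamma2.
  by apply: gamma2_max => j x _ _ _; rewrite mul0r subr_ge0 f_mono // finset.sub0set.
have cmin_gt0 : 0 < cmin by rewrite -cminE.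
exact: (approx_greedy_guarantee y1 c_gt0 B_ge0 (fPa_set0 Fp H) f_mono approx feasible
  optimal order gamma1_ok gamma1_ge0 cmin_le cmin_gt0 le_cmax gamma2_ok gamma2_ge0 output).
Qed.
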